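(* Let $n\geq2$ and let $\mathcal{C}\to\mathbb{P}^{n-1}$ be a genus one normal curve of degree $n$ over $\mathbb{C}$ (a double cover of $\mathbb{P}^1$ if $n=2$) with Jacobian $E$. For each $T\in E[n](\mathbb{C})$ let $M_T\in GL_n(\mathbb{C})$ be any matrix describing the action of $T$ on $\mathcal{C}\to\mathbb{P}^{n-1}$. Then, up to a positive real scalar, the reduction covariant of $\mathcal{C}$ is $$\varphi_{\mathbb{C}}(\mathcal{C})=\sum_{T\in E[n](\mathbb{C})}\frac{1}{|\det M_T|^{2/n}}\,\overline{M}_T^{\,t}M_T.$$
   Context: $E[n]$ acts on $\mathcal{C}$ by translation (as $\mathcal{C}$ is a torsor under $E$), and this action extends to an action on $\mathbb{P}^{n-1}$ by projective linear transformations, giving a homomorphism $\chi:E[n](\mathbb{C})\to PGL_n(\mathbb{C})$; $M_T$ is any lift of $\chi(T)$ to $GL_n(\mathbb{C})$. The Heisenberg group $H_n$ is the preimage of $\chi(E[n](\mathbb{C}))$ in $SL_n(\mathbb{C})$. The reduction covariant $\varphi_{\mathbb{C}}(\mathcal{C})$ is the positive definite Hermitian $n\times n$ matrix $M$, unique up to positive real scalars, such that $\bar h^{-t}Mh^{-1}=M$ for all $h\in H_n$ (the matrix of the $H_n$-invariant inner product). *)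

From HB Require Import structures.
From mathcomp Require Import all_boot all_order all_algebra.
Set Implicit Arguments. Unset Strict Implicit. Unset Printing Implicit Defensive.
Import Order.TTheory GRing.Theory Num.Theory.
Local Open Scope ring_scope.

(* Complex field: any numClosedFieldType C (e.g. R[i] for a real closed R,
   in particular the complex numbers).  Positivity "0 < x" in C means x is a
   positive real number. *)

Definition conjT (C : numClosedFieldType) m p (A : 'M[C]_(m, p)) : 'M[C]_(p, m) :=
  (map_mx Num.conj A)^T.

(* E[n](C), abstractly isomorphic to (Z/nZ)^2 *)
Notation torsion_grp n := ('Z_n * 'Z_n)%type.

(* chi : E[n] -> PGL_n is a group homomorphism, with chosen lifts M T in GL_n *)
Definition projective_hom (C : numClosedFieldType) n
    (M : torsion_grp n -> 'M[C]_n) : Prop :=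
  (forall T, M T \in unitmx) /\
  (forall S T, exists c : C, M S *m M T = c *: M (S + T)).

(* The action comes from a genus one normal curve: the commutator pairing
   (Weil pairing) M_S M_T M_S^-1 M_T^-1 = e_n(S,T) is non-degenerate. *)
Definition weil_nondegenerate (C : numClosedFieldType) n
    (M : torsion_grp n -> 'M[C]_n) : Prop :=
  forall S, S != 0 -> exists T, M S *m M T != M T *m M S.

Definition in_heisenberg (C : numClosedFieldType) n
    (M : torsion_grp n -> 'M[C]_n) (h : 'M[C]_n) : Prop :=
  \det h = 1 /\ exists T, exists lam : C, h = lam *: M T.

Definition hermitian (C : numClosedFieldType) n (A : 'M[C]_n) : Prop :=
  conjT A = A.

Definition pos_def (C : numClosedFieldType) n (A : 'M[C]_n) : Prop :=
  hermitian A /\ forall v : 'cV[C]_n, v != 0 -> 0 < (conjT v *m A *m v) 0 0.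

Definition is_reduction_covariant (C : numClosedFieldType) n
    (M : torsion_grp n -> 'M[C]_n) (A : 'M[C]_n) : Prop :=
  pos_def A /\
  forall h, in_heisenberg M h -> invmx (conjT h) *m A *m invmx h = A.

Definition det_weight (C : numClosedFieldType) n (A : 'M[C]_n) : C :=
  (n.-root `|\det A|) ^+ 2.

Definition covariant_sum (C : numClosedFieldType) n
    (M : torsion_grp n -> 'M[C]_n) : 'M[C]_n :=
  \sum_(T : torsion_grp n) (det_weight (M T))^-1 *: (conjT (M T) *m M T).

From mathcomp Require Import all_boot all_order all_algebra.
Import Order.TTheory GRing.Theory Num.Theory.
Local Open Scope ring_scope.
Set Implicit Arguments. Unset Strict Implicit.

(* The twists M_T are trace-orthogonal: by non-degeneracy of the commutator
   pairing, tr (M_V Y) = 0 whenever V != 0 and Y commutes with all M_S, while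
   M_{-U} M_U is a nonzero scalar.  Hence the n^2 matrices M_T form a basis of
   'M_n and the commutant of {M_T} consists of scalars (Schur's lemma).  The
   sum over T of the forms |det M_T|^{-2/n} (M_T v)^* (M_T v) is positive
   definite, and h in H_n only permutes its terms, the scalar by which M_S h
   differs from M_{S+T} being exactly compensated by the determinant weight.
   Finally two H_n-invariant forms B, A give B^-1 A in the commutant, so
   A = r B with r > 0 by positivity. *)

Lemma unitmx_neq0 (F : fieldType) n (A : 'M[F]_n) :
  (0 < n)%N -> A \in unitmx -> A != 0.
Proof.
case: n A => // n A _; apply: contraL => /eqP->.
by rewrite unitmxE det0 unitr0.
Qed.

Lemma invmx_sandwich (R : comUnitRingType) n (g h A : 'M[R]_n) :
  g \in unitmx -> h \in unitmx -> g *m A *m h = A ->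
  invmx g *m A *m invmx h = A.
Proof.
by move=> gU hU eA; rewrite -{1}eA !mulmxA mulVmx // mul1mx -mulmxA mulmxV ?mulmx1.
Qed.

Lemma sandwich_fixed_commute (R : comUnitRingType) n (g h A B : 'M[R]_n) :
  B \in unitmx -> g *m B *m h = B -> g *m A *m h = A ->
  h *m (invmx B *m A) = (invmx B *m A) *m h.
Proof.
move=> BU eB eA.
have hB_g : h *m invmx B *m g = invmx B.
  have gBh1 : invmx B *m g *m B *m h = 1%:M by rewrite -!mulmxA (mulmxA g) eB mulVmx.
  have := mulmx1C gBh1; rewrite !mulmxA => /(congr1 (mulmx^~ (invmx B))).
  by rewrite -[_ *m B *m invmx B]mulmxA mulmxV // mulmx1 mul1mx.
by rewrite -{1}eA !mulmxA hB_g.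
Qed.

Section ConjugateTranspose.

Variable C : numClosedFieldType.

Lemma conjT_mulmx m p q (A : 'M[C]_(m, p)) (B : 'M[C]_(p, q)) :
  conjT (A *m B) = conjT B *m conjT A.
Proof.
apply/matrixP => i j; rewrite !mxE rmorph_sum; apply: eq_bigr => k _.
by rewrite !mxE rmorphM mulrC.
Qed.

Lemma conjTK m p (A : 'M[C]_(m, p)) : conjT (conjT A) = A.
Proof. by apply/matrixP => i j; rewrite !mxE conjCK. Qed.

Lemma conjTZ m p c (A : 'M[C]_(m, p)) : conjT (c *: A) = c^* *: conjT A.
Proof. by apply/matrixP => i j; rewrite !mxE rmorphM. Qed.

Lemma conjT_sum m p (I : finType) (F : I -> 'M[C]_(m, p)) :
  conjT (\sum_i F i) = \sum_i conjT (F i).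
Proof.
apply/matrixP => i j; rewrite mxE summxE mxE summxE rmorph_sum.
by apply: eq_bigr => k _; rewrite !mxE.
Qed.

Lemma conjT_unitmx n (A : 'M[C]_n) : (conjT A \in unitmx) = (A \in unitmx).
Proof. by rewrite /conjT unitmx_tr map_unitmx. Qed.

Lemma conjT_mul_self_ge0 n (u : 'cV[C]_n) : 0 <= (conjT u *m u) 0 0.
Proof.
rewrite !mxE; apply: sumr_ge0 => i _; rewrite !mxE mulrC; exact: mul_conjC_ge0.
Qed.

Lemma conjT_mul_self_gt0 n (u : 'cV[C]_n) : u != 0 -> 0 < (conjT u *m u) 0 0.
Proof.
case/cV0Pn => i ui; rewrite !mxE (bigD1 i) //=.
apply: (@lt_le_trans _ _ ((conjT u) 0 i * u i 0)).
  by rewrite !mxE mulrC mul_conjC_gt0.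
rewrite lerDl; apply: sumr_ge0 => j _; rewrite !mxE mulrC; exact: mul_conjC_ge0.
Qed.

Lemma pos_def_unitmx n (B : 'M[C]_n) : pos_def B -> B \in unitmx.
Proof.
case=> _ posB; rewrite unitmxE unitfE; apply/negP => /eqP detB0.
have /det0P [v v0 vB] : \det B^T == 0 by rewrite det_tr detB0.
have := posB v^T; rewrite trmx_eq0 -mulmxA => /(_ v0).
have -> : B *m v^T = 0 by rewrite -[B]trmxK -trmx_mul vB trmx0.
by rewrite mulmx0 mxE ltxx.
Qed.

Lemma pos_def_scale_gt0 n (r : C) (B : 'M[C]_n) :
  (0 < n)%N -> pos_def B -> pos_def (r *: B) -> 0 < r.
Proof.
move=> n_gt0 [_ posB] [_ posrB].
pose v : 'cV[C]_n := const_mx 1.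
have v0 : v != 0 by apply/cV0Pn; exists (Ordinal n_gt0); rewrite mxE oner_eq0.
have := posrB _ v0; rewrite -scalemxAr -scalemxAl mxE.
by rewrite pmulr_lgt0 // posB.
Qed.

Lemma det_weight_gt0 n (A : 'M[C]_n) :
  (0 < n)%N -> A \in unitmx -> 0 < det_weight A.
Proof.
move=> n_gt0 AU; rewrite /det_weight exprn_gt0 // rootC_gt0 // normr_gt0.
by rewrite unitmxE unitfE in AU.
Qed.

Lemma det_weight_scale n (A B : 'M[C]_n) (d : C) :
  (0 < n)%N -> A \in unitmx -> \det A = d ^+ n * \det B ->
  (det_weight A)^-1 * (d^* * d) = (det_weight B)^-1.
Proof.
move=> n_gt0 AU detA.
have dA : \det A != 0 by rewrite -unitfE -unitmxE.
have d0 : d != 0.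
  by apply: contra dA => /eqP d0; rewrite detA d0 expr0n eqn0Ngt n_gt0 mul0r.
rewrite /det_weight detA normrM normrX rootCMl ?exprn_ge0 // exprCK //.
rewrite -normCKC exprMn invfM mulrAC mulVf ?mul1r //.
by rewrite expf_neq0 // normr_eq0.
Qed.

End ConjugateTranspose.

Section ProjectiveRepresentation.

Variables (C : numClosedFieldType) (n : nat) (M : torsion_grp n -> 'M[C]_n).
Hypotheses (n_gt1 : (1 < n)%N) (hM : projective_hom M).

Let n_gt0 : (0 < n)%N := ltnW n_gt1.
Let MU := hM.1.

Lemma in_heisenberg_unitmx h : in_heisenberg M h -> h \in unitmx.
Proof. by case=> deth _; rewrite unitmxE deth unitr1. Qed.

Lemma heisenberg_lift S : exists2 lam : C, lam != 0 & in_heisenberg M (lam *: M S).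
Proof.
have detS : \det (M S) != 0 by rewrite -unitfE -unitmxE MU.
exists (n.-root (\det (M S))^-1); first by rewrite rootC_eq0 // invr_eq0.
by split; [rewrite detZ rootCK // mulVf | exists S, (n.-root (\det (M S))^-1)].
Qed.

Lemma projective_hom_mul_neq0 S T (c : C) :
  M S *m M T = c *: M (S + T) -> c != 0.
Proof.
move=> eST; apply/negP => /eqP c0.
have : M S *m M T \in unitmx by rewrite unitmx_mul !MU.
by move/(unitmx_neq0 n_gt0); rewrite eST c0 scale0r eqxx.
Qed.

Lemma projective_hom0_scalar : exists2 k : C, k != 0 & M 0 = k%:M.
Proof.
have [c e00] := hM.2 0 0; exists c; first exact: projective_hom_mul_neq0 e00.
rewrite addr0 in e00.
by rewrite -[M 0]mulmx1 -(mulmxV (MU 0)) mulmxA e00 -scalemxAl mulmxV // scalemx1.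
Qed.

Lemma mxtrace_inverse_pair_neq0 U : \tr (M (- U) *m M U) != 0.
Proof.
have [c eUU] := hM.2 (- U) U; have c0 := projective_hom_mul_neq0 eUU.
have [k k0 Mk] := projective_hom0_scalar.
rewrite eUU addNr Mk mxtraceZ mxtrace_scalar -mulr_natr !mulf_neq0 //.
by rewrite pnatr_eq0 -lt0n.
Qed.

Hypothesis hW : weil_nondegenerate M.

(* The commutator of M_V with some M_S is a scalar e != 1, so conjugation by
   M_S multiplies tr (M_V Y) by e. *)
Lemma mxtrace_mul_commutant_eq0 V Y :
  V != 0 -> (forall S, Y *m M S = M S *m Y) -> \tr (M V *m Y) = 0.
Proof.
move=> /hW [S noncomm] Ycomm.
have [c1 eVS] := hM.2 V S; have [c2 eSV] := hM.2 S V.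
rewrite addrC in eVS; have c20 := projective_hom_mul_neq0 eSV.
pose e := c1 / c2.
have e_neq1 : e != 1.
  apply: contra noncomm => /eqP e1; rewrite eVS eSV.
  by have -> : c1 = c2 by apply/eqP; rewrite -(divr1_eq e1).
have twist : M V *m M S = e *: (M S *m M V) by rewrite eVS eSV scalerA mulfVK.
have conj_VY : invmx (M S) *m (M V *m Y) *m M S = e *: (M V *m Y).
  transitivity (invmx (M S) *m (M V *m M S) *m Y); first by rewrite -!mulmxA Ycomm.
  by rewrite twist -scalemxAr !mulmxA mulVmx ?MU // mul1mx scalemxAl.
have : \tr (M V *m Y) = e * \tr (M V *m Y).
  by rewrite -mxtraceZ -conj_VY [in RHS]mxtrace_mulC mulmxA mulmxV ?MU // mul1mx.
move/eqP; rewrite -subr_eq0 -{1}[\tr _]mul1r -mulrBl mulf_eq0 subr_eq0.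
by rewrite eq_sym (negPf e_neq1) => /eqP.
Qed.

Lemma mxtrace_inverse_pair_eq0 U T : T != U -> \tr (M (- U) *m M T) = 0.
Proof.
move=> TU; have [c ->] := hM.2 (- U) T; rewrite mxtraceZ.
rewrite -[M (-U + T)]mulmx1 mxtrace_mul_commutant_eq0 ?mulr0 //.
  by rewrite addrC subr_eq0.
by move=> S; rewrite mul1mx mulmx1.
Qed.

Lemma mxtrace_projective_coord U (a : 'I_#|{: torsion_grp n}| -> C) :
  \tr (M (- U) *m \sum_i a i *: M (enum_val i)) =
  a (enum_rank U) * \tr (M (- U) *m M U).
Proof.
rewrite mulmx_sumr raddf_sum (bigD1 (enum_rank U)) //= big1 ?addr0.
  by rewrite -scalemxAr mxtraceZ enum_rankK.
move=> j jU; rewrite -scalemxAr mxtraceZ mxtrace_inverse_pair_eq0 ?mulr0 //.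
by apply: contra jU => /eqP <-; rewrite enum_valK.
Qed.

Lemma projective_coord_eq0 U (a : 'I_#|{: torsion_grp n}| -> C) :
  \tr (M (- U) *m \sum_i a i *: M (enum_val i)) = 0 -> a (enum_rank U) = 0.
Proof.
rewrite mxtrace_projective_coord => /eqP.
by rewrite mulf_eq0 (negPf (mxtrace_inverse_pair_neq0 _)) orbF => /eqP.
Qed.

Lemma projective_hom_span (X : 'M[C]_n) :
  exists a : 'I_#|{: torsion_grp n}| -> C, X = \sum_i a i *: M (enum_val i).
Proof.
pose P : 'M[C]_(#|{: torsion_grp n}|, n * n) := \matrix_i mxvec (M (enum_val i)).
have mulP v : v *m P = mxvec (\sum_i v 0 i *: M (enum_val i)).
  rewrite mulmx_sum_row raddf_sum; apply: eq_bigr => i _.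
  by rewrite rowK -[RHS]/(mxvec _) linearZ.
have P_free : row_free P.
  apply: inj_row_free => v; rewrite mulP => /(congr1 vec_mx).
  rewrite mxvecK linear0 => v_comb0; apply/rowP => i; rewrite mxE.
  rewrite -[i]enum_valK; apply: projective_coord_eq0.
  by rewrite v_comb0 mulmx0 linear0.
have P_full : row_full P.
  by rewrite /row_full (eqP P_free) card_prod card_ord Zp_cast.
have /submxP [D eX] := submx_full (mxvec X) P_full.
by exists (fun i => D 0 i); apply: (can_inj mxvecK); rewrite eX mulP.
Qed.

Lemma projective_commutant_scalar (X : 'M[C]_n) :
  (forall S, X *m M S = M S *m X) -> exists r : C, X = r%:M.
Proof.
move=> Xcomm; have [a eX] := projective_hom_span X.
have a_eq0 i : enum_val i != 0 :> torsion_grp n -> a i = 0.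
  move=> i0; rewrite -[i]enum_valK; apply: projective_coord_eq0.
  by rewrite -eX mxtrace_mul_commutant_eq0 ?oppr_eq0.
have [k _ Mk] := projective_hom0_scalar.
exists (a (enum_rank (0 : torsion_grp n)) * k).
rewrite eX (bigD1 (enum_rank (0 : torsion_grp n))) //= big1 ?addr0.
  by rewrite enum_rankK Mk -scalemx1 scalerA scalemx1.
move=> j j0; rewrite a_eq0 ?scale0r //.
by apply: contra j0 => /eqP <-; rewrite enum_valK.
Qed.

End ProjectiveRepresentation.

Section CovariantSum.

Variables (C : numClosedFieldType) (n : nat) (M : torsion_grp n -> 'M[C]_n).
Hypotheses (n_gt0 : (0 < n)%N) (hM : projective_hom M).

Lemma covariant_sum_sandwich k (K : 'M[C]_(n, k)) :
  conjT K *m covariant_sum M *m K =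
  \sum_T (det_weight (M T))^-1 *: (conjT (M T *m K) *m (M T *m K)).
Proof.
rewrite /covariant_sum mulmx_sumr mulmx_suml; apply: eq_bigr => T _.
by rewrite -scalemxAr -scalemxAl conjT_mulmx !mulmxA.
Qed.

Lemma covariant_sum_pos_def : pos_def (covariant_sum M).
Proof.
have wT T : 0 < (det_weight (M T))^-1 by rewrite invr_gt0 det_weight_gt0 // hM.1.
split.
  change (conjT (covariant_sum M) = covariant_sum M).
  rewrite /covariant_sum conjT_sum; apply: eq_bigr => T _.
  by rewrite conjTZ conjT_mulmx conjTK geC0_conj // ltW.
move=> v v0; rewrite covariant_sum_sandwich summxE (bigD1 (0 : torsion_grp n)) //=.
have M0v : M 0 *m v != 0.
  apply: contra v0 => /eqP M0v.
  by rewrite -[v]mul1mx -(mulVmx (hM.1 0)) -mulmxA M0v mulmx0.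
rewrite mxE ltr_wpDr ?mulr_gt0 ?conjT_mul_self_gt0 //.
by apply: sumr_ge0 => T _; rewrite mxE mulr_ge0 ?conjT_mul_self_ge0 // ltW.
Qed.

(* h = lam M_T sends the term of S to the term of S + T with the factor
   |lam c|^2, where M_S M_T = c M_{S+T}; det h = 1 turns this into the ratio
   of determinant weights. *)
Lemma covariant_sum_heisenberg_fixed h :
  in_heisenberg M h -> conjT h *m covariant_sum M *m h = covariant_sum M.
Proof.
case=> deth [T [lam eh]]; subst h.
rewrite covariant_sum_sandwich /covariant_sum [RHS](reindex_inj (addIr T)) /=.
apply: eq_bigr => S _.
have [c eST] := hM.2 S T.
have MSh : M S *m (lam *: M T) = (lam * c) *: M (S + T).
  by rewrite -scalemxAr eST scalerA.
rewrite MSh conjTZ -scalemxAl -scalemxAr !scalerA -mulrA.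
congr (_ *: _); apply: det_weight_scale => //; first exact: hM.1.
by rewrite -[\det (M S)]mulr1 -deth -det_mulmx MSh detZ.
Qed.

End CovariantSum.

Lemma reduction_covariant_commute (C : numClosedFieldType) n
    (M : torsion_grp n -> 'M[C]_n) (A : 'M[C]_n) :
  (1 < n)%N -> projective_hom M ->
  (forall h, in_heisenberg M h -> invmx (conjT h) *m A *m invmx h = A) ->
  forall S, (invmx (covariant_sum M) *m A) *m M S = M S *m (invmx (covariant_sum M) *m A).
Proof.
move=> n_gt1 hM Afixed S; have n_gt0 := ltnW n_gt1.
have [lam lam0 hS] := heisenberg_lift n_gt1 hM S.
have hU := in_heisenberg_unitmx hS.
have hcU : conjT (lam *: M S) \in unitmx by rewrite conjT_unitmx.
have AhS : conjT (lam *: M S) *m A *m (lam *: M S) = A.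
  have := @invmx_sandwich _ _ (invmx (conjT (lam *: M S))) (invmx (lam *: M S)) A.
  by rewrite !unitmx_inv !invmxK => /(_ hcU hU (Afixed _ hS)).
have := sandwich_fixed_commute (pos_def_unitmx (covariant_sum_pos_def n_gt0 hM))
  (covariant_sum_heisenberg_fixed n_gt0 hM hS) AhS.
by rewrite -scalemxAl -scalemxAr => /(scalerI lam0).
Qed.

Unset Implicit Arguments.

Theorem corollary6p3 (C : numClosedFieldType) (n : nat) (hn : (1 < n)%N)
    (M : torsion_grp n -> 'M[C]_n)
    (hM : projective_hom M) (hW : weil_nondegenerate M) :
  is_reduction_covariant M (covariant_sum M) /\
  forall A : 'M[C]_n, is_reduction_covariant M A ->
    exists r : C, 0 < r /\ A = r *: covariant_sum M.
Proof.
have n_gt0 : (0 < n)%N := ltnW hn.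
have B_pd := covariant_sum_pos_def n_gt0 hM.
split.
  split=> // h hh; have hU := in_heisenberg_unitmx hh.
  apply: invmx_sandwich (covariant_sum_heisenberg_fixed n_gt0 hM hh) => //.
  by rewrite conjT_unitmx.
move=> A [A_pd Afixed].
have [r er] := projective_commutant_scalar hn hM hW
  (reduction_covariant_commute hn hM Afixed).
have eA : A = r *: covariant_sum M.
  by rewrite -mul_mx_scalar -er mulmxA mulmxV ?pos_def_unitmx // mul1mx.
by exists r; split => //; apply: pos_def_scale_gt0 n_gt0 B_pd _; rewrite -eA.
Qed.
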